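(* Let $S$ and $T$ be valid configurations of $n\ge 2$ points each whose smallest enclosing discs have a common center, placed at the origin. Let $\delta$ be a direction forming an angle of at least $\pi/(24n)$ with every direction in $\Delta_S\cup\Delta_T$, and rotate coordinates so that $\delta$ is the positive $x$-direction. Let $s_1,\dots,s_n=\Pi_\delta(S)$ and $t_1,\dots,t_n=\Pi_\delta(T)$, and let $M_\delta(s_i)=t_i$. Then the translation $\vec v=\bigl((r(S)+r(T)+2)(1+8n),\,0\bigr)$ is valid with respect to $M_\delta$, and moreover the ordering $s_1,\dots,s_n$ yields a valid itinerary from $S$ to $T+\vec v$ with respect to $M_\delta$.
   Context: For $p\in\mathbb R^2$, $D(p)$ is the open unit disc centered at $p$. A configuration is a finite set of points in $\mathbb R^2$; it is valid if any two distinct points are at distance at least $2$. $r(P)$ is the radius of the smallest closed disc containing the point set $P$. Two distinct points $p,q\in S$ are Delaunay neighbors if there is a closed disc whose boundary passes through $p$ and $q$ and whose interior contains no point of $S$. $\Delta_S$ is the set of directions consisting of, for every pair of Delaunay neighbors $s,s'\in S$, the directions of the two common inner tangent lines of $D(s)$ and $D(s')$, each taken with both orientations; $\Delta_T$ is defined analogously. $\Pi_\delta(C)$ orders $C$ by decreasing $x$-coordinate, ties broken by decreasing $y$-coordinate. Given a bijection $M:S\to T$ and translation $\vec v$, an ordering $s_1,\dots,s_n$ of $S$ yields a valid itinerary if for each $i$, $\mathrm{conv}(D(s_i)\cup D(M(s_i)+\vec v))$ is disjoint from $D(s_j)$ for $j>i$ and from $D(M(s_j)+\vec v)$ for $j<i$;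 $\vec v$ is valid w.r.t. $M$ if some ordering yields a valid itinerary. *)

From Stdlib Require Import Reals Lra List Permutation.
Open Scope R_scope.

Definition point := (R * R)%type.

Definition padd (p q : point) : point := (fst p + fst q, snd p + snd q).
Definition psub (p q : point) : point := (fst p - fst q, snd p - snd q).
Definition pscale (a : R) (p : point) : point := (a * fst p, a * snd p).
Definition dot (p q : point) : R := fst p * fst q + snd p * snd q.
Definition cross (p q : point) : R := fst p * snd q - snd p * fst q.
Definition dist (p q : point) : R := sqrt (dot (psub p q) (psub p q)).

(* a direction is a unit vector *)
Definition unit_vec (u : point) : Prop := dot u u = 1.

Definition angle (u w : point) : R := acos (dot u w).

Definition D (p : point) : point -> Prop := fun x => dist x p < 1.

Definition convex (C : point -> Prop) : Prop :=
  forall x y (l : R), C x -> C y -> 0 <= l <= 1 ->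
    C (padd (pscale (1 - l) x) (pscale l y)).

Definition conv (A : point -> Prop) : point -> Prop :=
  fun x => forall C, convex C -> (forall y, A y -> C y) -> C x.

Definition union (A B : point -> Prop) : point -> Prop := fun x => A x \/ B x.
Definition disjoint (A B : point -> Prop) : Prop := forall x, ~ (A x /\ B x).

(* A configuration is a finite list of points; it is valid if any two distinct
   entries are at distance at least 2 (in particular the entries are distinct). *)
Definition valid_config (P : list point) : Prop :=
  forall i j, (i < length P)%nat -> (j < length P)%nat -> i <> j ->
    dist (nth i P (0,0)) (nth j P (0,0)) >= 2.

Definition smallest_enclosing_disc (P : list point) (c : point) (r : R) : Prop :=
  (forall p, In p P -> dist p c <= r) /\
  (forall c' r', (forall p, In p P -> dist p c' <= r') -> r <= r').

Definition delaunay_neighbors (S : list point) (p q : point) : Prop :=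
  In p S /\ In q S /\ p <> q /\
  exists (c : point) (rho : R),
    dist p c = rho /\ dist q c = rho /\ (forall s, In s S -> ~ dist s c < rho).

(* u (a unit vector) is the direction, with some orientation, of a common inner
   tangent line of D(p) and D(q): the line {a + l u} is at distance exactly 1
   from p and from q and separates p from q. *)
Definition inner_tangent_dir (p q u : point) : Prop :=
  unit_vec u /\ exists a : point,
    Rabs (cross u (psub p a)) = 1 /\ Rabs (cross u (psub q a)) = 1 /\
    cross u (psub p a) * cross u (psub q a) < 0.

Definition DeltaDirs (S : list point) (u : point) : Prop :=
  exists p q, delaunay_neighbors S p q /\ inner_tangent_dir p q u.

(* coordinates in the rotated frame where delta is the positive x-direction *)
Definition perp (d : point) : point := (- snd d, fst d).
Definition xcoord (d p : point) : R := dot p d.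
Definition ycoord (d p : point) : R := dot p (perp d).

Definition pi_before (d p q : point) : Prop :=
  xcoord d p > xcoord d q \/ (xcoord d p = xcoord d q /\ ycoord d p > ycoord d q).

(* s is Pi_delta(S): a reordering of S sorted by Pi_delta *)
Definition is_Pi (d : point) (S s : list point) : Prop :=
  Permutation.Permutation S s /\
  forall i j, (i < j)%nat -> (j < length s)%nat ->
    pi_before d (nth i s (0,0)) (nth j s (0,0)).

(* An ordering of S together with the matching, given as the list of pairs
   (s_i, M(s_i)); it yields a valid itinerary for translation v. *)
Definition valid_itinerary (l : list (point * point)) (v : point) : Prop :=
  forall i, (i < length l)%nat ->
    let si := fst (nth i l ((0,0),(0,0))) in
    let ti := snd (nth i l ((0,0),(0,0))) in
    let H := conv (union (D si) (D (padd ti v))) in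
    (forall j, (i < j)%nat -> (j < length l)%nat ->
       disjoint H (D (fst (nth j l ((0,0),(0,0)))))) /\
    (forall j, (j < i)%nat ->
       disjoint H (D (padd (snd (nth j l ((0,0),(0,0)))) v))).

(* The matching M is given as the list of pairs (s, M s) (one per point of S);
   v is valid w.r.t. M if some ordering of S yields a valid itinerary. *)
Definition valid_translation (M : list (point * point)) (v : point) : Prop :=
  exists l, Permutation.Permutation M l /\ valid_itinerary l v.

(* In step i the disc at s_i sweeps the convex hull of D(s_i) and
   D(t_i + v), which lies in the open 1-neighbourhood of the segment
   [s_i, t_i + v].  Because v is long, this segment has slope at most
   1/(8n) relative to delta.  Every disc that must be avoided is centred at a
   point q of the same configuration lying behind the start p of the segment
   (sources s_j, j > i, are behind s_i in direction delta; already placed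
   targets t_j + v, j < i, are behind t_i + v in direction -delta).  If the
   segment came within distance 2 of q, then p and q would be at distance at
   most sqrt 8, hence Delaunay neighbours, and an inner common tangent of
   D(p), D(q) would make an angle < PI/(24n) with delta, contradicting the
   genericity of delta. *)

From Pilot Require Import Defs.
From Stdlib Require Import Reals List Lra Psatz Permutation.
Open Scope R_scope.

(* Squared Euclidean norm; all metric reasoning is done on squares. *)
Definition norm2 (p : point) : R := dot p p.

Ltac coords :=
  unfold norm2, unit_vec, dot, cross, psub, padd, pscale in *; cbn [fst snd] in *.

Lemma sqrt_lt_1_iff (z : R) : 0 <= z -> (sqrt z < 1 <-> z < 1).
Proof.
intros Hz; split; intros H.
- rewrite <- sqrt_1 in H. exact (sqrt_lt_0_alt _ _ H).
- rewrite <- sqrt_1. apply sqrt_lt_1_alt; lra.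
Qed.

Lemma norm2_nonneg (p : point) : 0 <= norm2 p.
Proof. destruct p as [p1 p2]; coords; nra. Qed.

Lemma in_D_iff (p x : point) : D p x <-> norm2 (psub x p) < 1.
Proof. apply sqrt_lt_1_iff, norm2_nonneg. Qed.

Lemma dist_ge_2 (p q : point) : Defs.dist p q >= 2 -> 4 <= norm2 (psub p q).
Proof.
intros H. unfold Defs.dist in H. fold (norm2 (psub p q)) in H.
pose proof (norm2_nonneg (psub p q)) as H0.
rewrite <- (pow2_sqrt _ H0). nra.
Qed.

Definition stadium (p r : point) : point -> Prop := fun x =>
  exists l, 0 <= l <= 1 /\ norm2 (psub (psub x p) (pscale l (psub r p))) < 1.

Lemma unit_disc_convex (a b : point) (l : R) : norm2 a < 1 -> norm2 b < 1 -> 0 <= l <= 1 ->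
  norm2 (padd (pscale (1 - l) a) (pscale l b)) < 1.
Proof.
destruct a as [a1 a2], b as [b1 b2]; coords. intros Ha Hb Hl.
set (X := a1 * a1 + a2 * a2) in *. set (Y := b1 * b1 + b2 * b2) in *.
assert (Hab : 2 * (a1 * b1 + a2 * b2) <= X + Y)
  by (unfold X, Y; pose proof (pow2_ge_0 (a1 - b1)); pose proof (pow2_ge_0 (a2 - b2)); nra).
assert (Hmix : l * (1 - l) * (2 * (a1 * b1 + a2 * b2)) <= l * (1 - l) * (X + Y))
  by (apply Rmult_le_compat_l; nra).
assert (Hexp : ((1 - l) * a1 + l * b1) * ((1 - l) * a1 + l * b1)
             + ((1 - l) * a2 + l * b2) * ((1 - l) * a2 + l * b2)
             = (1 - l) ^ 2 * X + l * (1 - l) * (2 * (a1 * b1 + a2 * b2)) + l ^ 2 * Y)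
  by (unfold X, Y; ring).
assert (Hcomb : (1 - l) * X + l * Y < 1).
{ destruct (Rle_or_lt Y X).
  - assert (l * (X - Y) >= 0) by (apply Rle_ge, Rmult_le_pos; lra). lra.
  - assert ((1 - l) * (Y - X) >= 0) by (apply Rle_ge, Rmult_le_pos; lra). lra. }
rewrite Hexp. nra.
Qed.

(* Stadiums are convex: average both the points and the segment parameters. *)
Lemma stadium_convex (p r : point) : convex (stadium p r).
Proof.
intros x y l [lx [Hlx Hx]] [ly [Hly Hy]] Hl.
exists ((1 - l) * lx + l * ly). split; [nra|].
pose proof (unit_disc_convex _ _ l Hx Hy Hl) as H.
destruct p, r, x, y; coords.
match goal with |- ?L < 1 => match type of H with ?M < 1 => replace L with M by ring end end.
exact H.
Qed.

Lemma hull_in_stadium (p r x : point) :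
  conv (union (D p) (D r)) x -> stadium p r x.
Proof.
intros Hx. apply Hx; [apply stadium_convex|].
intros y [Hy|Hy]; apply in_D_iff in Hy.
- exists 0. split; [lra|]. destruct p, r, y; coords. nra.
- exists 1. split; [lra|]. destruct p, r, y; coords. nra.
Qed.

Lemma hull_disjoint (p r q : point) :
  (forall l, 0 <= l <= 1 -> 4 <= norm2 (psub (psub q p) (pscale l (psub r p)))) ->
  disjoint (conv (union (D p) (D r))) (D q).
Proof.
intros Hfar x [Hx Hq].
destruct (hull_in_stadium _ _ _ Hx) as [l [Hl Hxl]].
apply in_D_iff in Hq. specialize (Hfar l Hl).
destruct p as [p1 p2], r as [r1 r2], q as [q1 q2], x as [x1 x2]; coords.
(* q - p - l (r - p) = a - b with |a| < 1 and |b| < 1 *)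
set (a1 := x1 - p1 - l * (r1 - p1)) in *. set (a2 := x2 - p2 - l * (r2 - p2)) in *.
set (b1 := x1 - q1) in *. set (b2 := x2 - q2) in *.
replace (q1 - p1 - l * (r1 - p1)) with (a1 - b1) in Hfar by (unfold a1, b1; ring).
replace (q2 - p2 - l * (r2 - p2)) with (a2 - b2) in Hfar by (unfold a2, b2; ring).
clearbody a1 a2 b1 b2.
pose proof (pow2_ge_0 (a1 + b1)); pose proof (pow2_ge_0 (a2 + b2)). nra.
Qed.

Lemma disjoint_hull_comm (A B C : point -> Prop) :
  disjoint (conv (union A B)) C -> disjoint (conv (union B A)) C.
Proof.
intros H x [Hx Hc]. apply (H x). split; [|exact Hc].
intros K HK HAB. apply Hx; [exact HK|].
intros y Hy. apply HAB. destruct Hy; [right|left]; assumption.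
Qed.

Lemma sq_lt_pos (P Q : R) : 0 <= P -> 0 < Q -> P ^ 2 < Q ^ 2 -> P < Q.
Proof. intros. destruct (Rlt_or_le P Q); auto. nra. Qed.

Lemma abs_le_of_sq (x y : R) : x ^ 2 <= y ^ 2 -> 0 <= y -> - y <= x <= y.
Proof. intros. split; nra. Qed.

(* In an orthonormal frame, f = (-a, b) lies behind the origin
   (a >= 0) with b > 0, and w = (W, z) is a direction of slope 0 <= z/W <= s.
   If f projects positively on w and lies within distance 2 of the line R w,
   then |f|^2 <= 8 and the line through f/2 with direction (al, be) is at
   distance exactly 1 from 0 and from f (al b + be a = 2), making an angle
   with the first axis whose cosine al exceeds any c with c^2 < 1 - s^2. *)
Lemma tangent_in_frame (a b z W s c : R) :
  0 <= a -> 0 < b -> 0 <= z -> 0 < W -> a * W < b * z ->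
  (a * z + b * W) ^ 2 < 4 * (W ^ 2 + z ^ 2) -> 4 <= a ^ 2 + b ^ 2 ->
  z <= s * W -> 0 <= s -> s ^ 2 <= 1/4 -> c ^ 2 < 1 - s ^ 2 ->
  a ^ 2 + b ^ 2 <= 8 /\
  exists al be, al ^ 2 + be ^ 2 = 1 /\ al * b + be * a = 2 /\ c < al.
Proof.
intros Ha Hb Hz HW HaW Hline HF Hzs Hs Hs2 Hc.
assert (Hz2 : z ^ 2 <= s ^ 2 * W ^ 2) by nra.
assert (HbW : (b * W) ^ 2 <= (a * z + b * W) ^ 2)
  by (assert (0 <= a * z) by nra; assert (0 <= b * W) by nra; nra).
(* the small slope confines f: b^2 < 4 (1 + s^2) and a < s b *)
assert (Hb2 : b ^ 2 < 4 * (1 + s ^ 2)).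
{ assert (b ^ 2 * W ^ 2 < 4 * (1 + s ^ 2) * W ^ 2) by nra.
  apply (Rmult_lt_reg_r (W ^ 2)); nra. }
assert (Hab : a < s * b).
{ assert (a * W < s * b * W) by nra. apply (Rmult_lt_reg_r W); lra. }
assert (Ha2 : a ^ 2 <= s ^ 2 * b ^ 2) by (assert (0 <= s * b) by nra; nra).
split; [nra|].
remember (a ^ 2 + b ^ 2) as F eqn:HFd.
(* h = half the length of the tangent segment from f/2 *)
set (h := sqrt (F - 4)).
assert (Hh0 : 0 <= h) by apply sqrt_pos.
assert (Hh2 : h ^ 2 = F - 4) by (unfold h; rewrite pow2_sqrt; lra).
clearbody h.
assert (Hid : 4 * (b * z - a * W) ^ 2 - h ^ 2 * (b * W + a * z) ^ 2
              = F * (4 * (W ^ 2 + z ^ 2) - (b * W + a * z) ^ 2))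
  by (rewrite Hh2, HFd; ring).
assert (HPQ : h * (b * W + a * z) < 2 * (b * z - a * W)).
{ apply sq_lt_pos.
  - apply Rmult_le_pos; [lra|]. assert (0 <= a * z) by nra. nra.
  - lra.
  - assert (0 < F * (4 * (W ^ 2 + z ^ 2) - (b * W + a * z) ^ 2))
      by (apply Rmult_lt_0_compat; nra).
    nra. }
set (X := 2 * b + h * a). set (Y := h * b - 2 * a).
assert (HX : 0 < X) by (unfold X; assert (0 <= h * a) by nra; lra).
assert (HhaZ : 0 <= h * a * z) by (apply Rmult_le_pos; nra).
assert (HhbW : 0 <= h * b * W) by (apply Rmult_le_pos; nra).
assert (HaW0 : 0 <= a * W) by nra.
assert (HYW : (Y * W) ^ 2 <= (z * X) ^ 2).
{ assert (Y * W <= z * X) by (unfold X, Y; nra).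
  assert (- (z * X) <= Y * W) by (unfold X, Y; nra). nra. }
assert (HXY : X ^ 2 + Y ^ 2 = F ^ 2).
{ unfold X, Y. rewrite HFd in Hh2 |- *. ring_simplify. rewrite Hh2. ring. }
assert (HX3 : F ^ 2 <= X ^ 2 * (1 + s ^ 2)).
{ assert (X ^ 2 * z ^ 2 <= X ^ 2 * (s ^ 2 * W ^ 2)) by (apply Rmult_le_compat_l; nra).
  apply (Rmult_le_reg_r (W ^ 2)); nra. }
assert (HF0 : 0 < F) by lra.
exists (X / F), (- Y / F). split; [|split].
- field_simplify; [|lra]. rewrite HXY. field. lra.
- unfold X, Y. field_simplify; [|lra]. rewrite HFd. field. lra.
- assert (Hal : 0 < X / F) by (apply Rdiv_lt_0_compat; lra).
  assert (Hal2 : 1 <= (X / F) ^ 2 * (1 + s ^ 2)).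
  { replace ((X / F) ^ 2 * (1 + s ^ 2)) with (X ^ 2 * (1 + s ^ 2) / F ^ 2) by (field; lra).
    apply (Rmult_le_reg_r (F ^ 2)); [nra|].
    unfold Rdiv. rewrite Rmult_assoc, Rinv_l; nra. }
  destruct (Rle_or_lt c 0); [lra|]. apply sq_lt_pos; nra.
Qed.

Lemma near_segment_near_line (a b z W l : R) :
  0 <= a -> 0 < W -> 4 <= a ^ 2 + b ^ 2 -> 0 <= l <= 1 ->
  (a + l * W) ^ 2 + (b - l * z) ^ 2 < 4 ->
  a * W < b * z /\ (a * z + b * W) ^ 2 < 4 * (W ^ 2 + z ^ 2).
Proof.
intros Ha HW HF Hl Hclose.
assert (Hexp : (a + l * W) ^ 2 + (b - l * z) ^ 2
               = (a ^ 2 + b ^ 2) + 2 * l * (a * W - b * z) + l ^ 2 * (W ^ 2 + z ^ 2)) by ring.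
assert (Hproj : a * W < b * z).
{ destruct (Rlt_or_le (a * W) (b * z)) as [h|h]; auto.
  assert (0 <= l * (a * W - b * z)) by (apply Rmult_le_pos; lra).
  assert (0 <= l ^ 2 * (W ^ 2 + z ^ 2)) by (apply Rmult_le_pos; nra). lra. }
split; [exact Hproj|].
(* Pythagoras along and across the direction w *)
assert (Hpyth : (W ^ 2 + z ^ 2) * ((a + l * W) ^ 2 + (b - l * z) ^ 2)
                = (l * (W ^ 2 + z ^ 2) - (b * z - a * W)) ^ 2 + (a * z + b * W) ^ 2) by ring.
assert ((W ^ 2 + z ^ 2) * ((a + l * W) ^ 2 + (b - l * z) ^ 2) < (W ^ 2 + z ^ 2) * 4)
  by (apply Rmult_lt_compat_l; nra).
pose proof (pow2_ge_0 (l * (W ^ 2 + z ^ 2) - (b * z - a * W))). lra.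
Qed.

Lemma tangent_near_segment_frame (a b z W s c l : R) :
  0 <= a -> 0 < W -> 4 <= a ^ 2 + b ^ 2 -> z ^ 2 <= s ^ 2 * W ^ 2 -> 0 <= s -> s ^ 2 <= 1/4 ->
  c ^ 2 < 1 - s ^ 2 -> 0 <= l <= 1 -> (a + l * W) ^ 2 + (b - l * z) ^ 2 < 4 ->
  a ^ 2 + b ^ 2 <= 8 /\
  exists al be, al ^ 2 + be ^ 2 = 1 /\ (al * b + be * a) ^ 2 = 4 /\ c < al.
Proof.
intros Ha HW HF Hz Hs Hs2 Hc Hl Hclose.
destruct (near_segment_near_line a b z W l) as [Hproj Hline]; try assumption.
assert (HaW : 0 <= a * W) by nra.
assert (Hzs : - (s * W) <= z <= s * W) by (apply abs_le_of_sq; nra).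
destruct (Rtotal_order b 0) as [hb|[hb|hb]].
- (* reflect the frame across the first axis *)
  destruct (tangent_in_frame a (- b) (- z) W s c) as [H8 [al [be [H1 [H2 H3]]]]]; try nra.
  split; [nra|]. exists al, (- be). split; [nra|split; [|lra]].
  replace (al * b + - be * a) with (- (al * - b + be * a)) by ring. rewrite H2. ring.
- subst b. nra.
- destruct (tangent_in_frame a b z W s c) as [H8 [al [be [H1 [H2 H3]]]]]; try nra.
  split; [nra|]. exists al, be. split; [nra|split; [|lra]]. rewrite H2. ring.
Qed.

Lemma tangent_near_segment (e f w : point) (s c l : R) :
  unit_vec e -> dot e f <= 0 -> 4 <= norm2 f -> 0 < dot e w ->
  cross e w ^ 2 <= s ^ 2 * dot e w ^ 2 -> 0 <= s -> s ^ 2 <= 1/4 -> c ^ 2 < 1 - s ^ 2 ->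
  0 <= l <= 1 -> norm2 (psub f (pscale l w)) < 4 ->
  norm2 f <= 8 /\ exists u, unit_vec u /\ cross u f ^ 2 = 4 /\ c < dot e u.
Proof.
destruct e as [e1 e2], f as [f1 f2], w as [w1 w2]; coords.
intros He Hef Hf HW Hz Hs Hs2 Hc Hl Hclose.
(* frame coordinates with respect to the orthonormal basis (e, e^perp) *)
assert (Hnf : (- (e1 * f1 + e2 * f2)) ^ 2 + (- e2 * f1 + e1 * f2) ^ 2 = f1 * f1 + f2 * f2)
  by (transitivity ((f1 * f1 + f2 * f2) * (e1 * e1 + e2 * e2)); [ring | rewrite He; ring]).
assert (Hnseg : (- (e1 * f1 + e2 * f2) + l * (e1 * w1 + e2 * w2)) ^ 2
                + ((- e2 * f1 + e1 * f2) - l * (- e2 * w1 + e1 * w2)) ^ 2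
                = (f1 - l * w1) * (f1 - l * w1) + (f2 - l * w2) * (f2 - l * w2)).
{ transitivity (((f1 - l * w1) * (f1 - l * w1) + (f2 - l * w2) * (f2 - l * w2))
                * (e1 * e1 + e2 * e2)); [ring | rewrite He; ring]. }
destruct (tangent_near_segment_frame (- (e1 * f1 + e2 * f2)) (- e2 * f1 + e1 * f2)
            (- e2 * w1 + e1 * w2) (e1 * w1 + e2 * w2) s c l)
  as [H8 [al [be [H1 [H2 H3]]]]]; try lra.
split; [lra|].
(* back to the original coordinates: u = al e + be e^perp *)
exists (al * e1 - be * e2, al * e2 + be * e1); cbn [fst snd]. split; [|split].
- transitivity ((al ^ 2 + be ^ 2) * (e1 * e1 + e2 * e2)); [ring | rewrite H1, He; ring].
- rewrite <- H2. ring.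
- replace (e1 * (al * e1 - be * e2) + e2 * (al * e2 + be * e1)) with (al * (e1 * e1 + e2 * e2))
    by ring.
  rewrite He. lra.
Qed.

(* A slope bound s and an angle g are compatible when s <= 1/2 and
   s < sin g (i.e. (cos g)^2 < 1 - s^2): these are exactly the hypotheses
   under which the key estimate yields a tangent direction within angle g. *)
Definition compatible_slope (s g : R) : Prop :=
  0 <= s /\ s ^ 2 <= 1/4 /\ cos g ^ 2 < 1 - s ^ 2 /\ 0 <= g <= PI.

(* 3.1 < PI, from the Taylor lower bound cos_lb at PI/2. *)
Lemma PI_gt_3_1 : 3.1 < PI.
Proof.
destruct (Rlt_or_le 3.1 PI) as [h|h]; [exact h|exfalso].
pose proof PI2_3_2 as Hlow.
destruct (COS (PI / 2)) as [Hcos _]; try lra.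
rewrite cos_PI2 in Hcos. unfold cos_lb, cos_approx, cos_term in Hcos. simpl in Hcos.
assert (Hy1 : 1.5 <= PI / 2 <= 1.55) by lra.
set (y := PI / 2) in *.
assert (Hy : 2.25 <= y * y <= 2.4025) by nra.
set (z := y * y) in *.
replace (y * (y * (y * (y * (y * (y * 1)))))) with (z ^ 3) in Hcos by (unfold z; ring).
replace (y * (y * (y * (y * 1)))) with (z ^ 2) in Hcos by (unfold z; ring).
replace (y * (y * 1)) with z in Hcos by (unfold z; ring).
assert (0 < 1 - z / 2 + z ^ 2 / 24 - z ^ 3 / 720) by nra.
lra.
Qed.

Lemma paper_constants_compatible (n : nat) : (2 <= n)%nat ->
  compatible_slope (1 / (8 * INR n)) (PI / (24 * INR n)).
Proof.
intros Hn.
assert (HN : 2 <= INR n) by (apply (le_INR 2); auto).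
set (g := PI / (24 * INR n)). set (s := 1 / (8 * INR n)).
pose proof PI_gt_3_1 as HPI. pose proof PI_4 as HP4.
assert (Hs0 : 0 < s) by (unfold s; apply Rdiv_lt_0_compat; lra).
assert (Hs1 : s <= 1/16)
  by (unfold s; apply Rmult_le_reg_r with (8 * INR n); [lra|]; field_simplify; lra).
assert (Hg0 : 0 < g) by (unfold g; apply Rdiv_lt_0_compat; lra).
assert (Hg1 : g <= 1/12)
  by (unfold g; apply Rmult_le_reg_r with (24 * INR n); [lra|]; field_simplify; lra).
(* s = 3 g / PI < 0.97 g *)
assert (Hsg : s * PI = 3 * g) by (unfold s, g; field; lra).
assert (Hsg2 : s < 0.97 * g) by nra.
(* the Taylor lower bound sin_lb g already exceeds 0.99 g > s *)
destruct (SIN g) as [Hsl _]; try lra.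
unfold sin_lb, sin_approx, sin_term in Hsl. simpl in Hsl.
assert (Hsin : s < sin g).
{ assert (Hz : 0 < g * g <= 1/144) by nra.
  replace (g * (g * (g * (g * (g * (g * (g * 1))))))) with (g * (g * g) ^ 3) in Hsl by ring.
  replace (g * (g * (g * (g * (g * 1))))) with (g * (g * g) ^ 2) in Hsl by ring.
  replace (g * (g * (g * 1))) with (g * (g * g)) in Hsl by ring.
  replace (g * 1) with g in Hsl by ring.
  set (z := g * g) in *.
  assert (z ^ 3 <= 1/144) by nra. assert (0 <= z ^ 2) by nra.
  assert (0.99 * g <= g * (1 - z / 6 - z ^ 3 / 5040)) by nra.
  nra. }
pose proof (sin2_cos2 g) as Hpyth. unfold Rsqr in Hpyth.
repeat split; try lra; nra.
Qed.

Lemma angle_lt_of_cos (e u : point) (g : R) : unit_vec e -> unit_vec u -> 0 <= g <= PI ->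
  cos g < dot e u -> angle e u < g.
Proof.
intros He Hu Hg Hc. unfold angle.
assert (Hx : -1 <= dot e u <= 1).
{ destruct e as [e1 e2], u as [u1 u2]; coords.
  assert (Hcs : (e1 * u1 + e2 * u2) ^ 2 + (e1 * u2 - e2 * u1) ^ 2
                = (e1 * e1 + e2 * e2) * (u1 * u1 + u2 * u2)) by ring.
  rewrite He, Hu in Hcs. pose proof (pow2_ge_0 (e1 * u2 - e2 * u1)).
  apply abs_le_of_sq; lra. }
destruct (Rlt_or_le (acos (dot e u)) g) as [h|h]; auto.
pose proof (acos_bound (dot e u)).
assert (cos (acos (dot e u)) <= cos g) by (apply cos_decr_1; lra).
rewrite cos_acos in *; lra.
Qed.

Lemma valid_config_far (Q : list point) (p q : point) : valid_config Q ->
  In p Q -> In q Q -> p <> q -> 4 <= norm2 (psub q p).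
Proof.
intros HQ Hp Hq Hne.
destruct (In_nth Q p (0,0) Hp) as [i [Hi Ei]].
destruct (In_nth Q q (0,0) Hq) as [j [Hj Ej]].
assert (Hij : j <> i) by (intros ->; congruence).
pose proof (HQ j i Hj Hi Hij) as Hd. rewrite Ei, Ej in Hd.
exact (dist_ge_2 _ _ Hd).
Qed.

(* Two points of a valid configuration at squared distance at most 8 are
   Delaunay neighbours: the disc with diameter [p, q] has radius at most
   sqrt 2, and any other point inside it would be within distance 2 of p or
   of q. *)
Lemma close_pair_delaunay (Q : list point) (p q : point) : valid_config Q ->
  In p Q -> In q Q -> p <> q -> norm2 (psub q p) <= 8 -> delaunay_neighbors Q p q.
Proof.
intros HQ Hp Hq Hne H8.
set (m := pscale (1/2) (padd p q)).
assert (Hpm : Defs.dist q m = Defs.dist p m)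
  by (unfold Defs.dist, m; destruct p, q; coords; f_equal; field).
assert (Hsqm : forall x, norm2 (psub x p) + norm2 (psub x q)
                 = 2 * norm2 (psub x m) + norm2 (psub q p) / 2)
  by (intros x; unfold m; destruct x, p, q; coords; field).
assert (Hpm2 : norm2 (psub p m) = norm2 (psub q p) / 4)
  by (unfold m; destruct p, q; coords; field).
split; [exact Hp|split; [exact Hq|split; [exact Hne|]]].
exists m, (Defs.dist p m). split; [reflexivity|split; [exact Hpm|]].
intros x Hx Hlt.
assert (Hxp : x <> p) by (intros ->; lra).
assert (Hxq : x <> q) by (intros ->; lra).
pose proof (valid_config_far Q _ _ HQ Hp Hx (not_eq_sym Hxp)) as Fp.
pose proof (valid_config_far Q _ _ HQ Hq Hx (not_eq_sym Hxq)) as Fq.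
apply sqrt_lt_0_alt in Hlt. fold (norm2 (psub x m)) (norm2 (psub p m)) in Hlt.
specialize (Hsqm x). lra.
Qed.

Lemma Rabs_of_sq_1 (x : R) : x ^ 2 = 1 -> Rabs x = 1.
Proof. intros. unfold Rabs; destruct (Rcase_abs x); nra. Qed.

(* A unit u with (u x (q - p))^2 = 4 is an inner tangent direction of D(p)
   and D(q): the line through the midpoint with direction u is at distance 1
   from p and from q and separates them. *)
Lemma inner_tangent_of_cross (p q u : point) : unit_vec u ->
  cross u (psub q p) ^ 2 = 4 -> inner_tangent_dir p q u.
Proof.
intros Hu Hk. split; [exact Hu|].
exists (pscale (1/2) (padd p q)).
set (K := cross u (psub q p)) in Hk.
assert (Ep : cross u (psub p (pscale (1/2) (padd p q))) = - (K / 2))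
  by (unfold K; destruct u, p, q; coords; field).
assert (Eq : cross u (psub q (pscale (1/2) (padd p q))) = K / 2)
  by (unfold K; destruct u, p, q; coords; field).
assert (HK : (K / 2) ^ 2 = 1) by (replace ((K / 2) ^ 2) with (K ^ 2 / 4) by field; lra).
rewrite Ep, Eq. split; [|split].
- rewrite Rabs_Ropp. apply Rabs_of_sq_1, HK.
- apply Rabs_of_sq_1, HK.
- nra.
Qed.

Lemma inner_tangent_dir_opp (p q u : point) :
  inner_tangent_dir p q u -> inner_tangent_dir p q (pscale (-1) u).
Proof.
intros [Hu [a [Hp [Hq Hsep]]]]. split.
- destruct u; coords; lra.
- exists a.
  assert (Hneg : forall x, cross (pscale (-1) u) x = - cross u x)
    by (intros x; destruct u, x; coords; ring).
  rewrite !Hneg, !Rabs_Ropp. split; [exact Hp|split; [exact Hq|nra]].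
Qed.

(* The angle condition of the theorem is symmetric under reversing delta,
   because Delta is closed under reversal of orientation. *)
Lemma angle_condition_opp (Q : list point) (d : point) (g : R) :
  (forall u, DeltaDirs Q u -> angle d u >= g) ->
  forall u, DeltaDirs Q u -> angle (pscale (-1) d) u >= g.
Proof.
intros Hang u [p [q [Hpq Ht]]].
assert (Hopp : DeltaDirs Q (pscale (-1) u))
  by (exists p, q; split; [exact Hpq|apply inner_tangent_dir_opp, Ht]).
replace (angle (pscale (-1) d) u) with (angle d (pscale (-1) u)); [exact (Hang _ Hopp)|].
unfold angle. f_equal. destruct d, u; coords. ring.
Qed.

(* Otherwise the key estimate would produce a Delaunay neighbour q of p and
   an inner tangent direction within angle g of e. *)
Lemma segment_clears (Q : list point) (e p q w : point) (s g : R) :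
  compatible_slope s g -> valid_config Q -> unit_vec e ->
  (forall u, DeltaDirs Q u -> angle e u >= g) ->
  In p Q -> In q Q -> p <> q -> dot e (psub q p) <= 0 ->
  0 < dot e w -> cross e w ^ 2 <= s ^ 2 * dot e w ^ 2 ->
  forall l, 0 <= l <= 1 -> 4 <= norm2 (psub (psub q p) (pscale l w)).
Proof.
intros [Hs [Hs2 [Hcos Hg]]] HQ He Hang Hp Hq Hne Hbehind Hw Hslope l Hl.
destruct (Rlt_or_le (norm2 (psub (psub q p) (pscale l w))) 4) as [Hclose|Hfar];
  [exfalso|exact Hfar].
pose proof (valid_config_far Q p q HQ Hp Hq Hne) as Hf.
destruct (tangent_near_segment e (psub q p) w s (cos g) l)
  as [H8 [u [Hu [Htan Hcu]]]]; try assumption.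
assert (Hdelta : DeltaDirs Q u).
{ exists p, q. split; [apply close_pair_delaunay; assumption|].
  apply inner_tangent_of_cross; assumption. }
pose proof (Hang u Hdelta). pose proof (angle_lt_of_cos e u g He Hu Hg Hcu). lra.
Qed.

Lemma enclosed_coords (Q : list point) (r : R) (e p : point) :
  smallest_enclosing_disc Q (0,0) r -> In p Q -> unit_vec e ->
  0 <= r /\ - r <= dot e p <= r /\ - r <= cross e p <= r.
Proof.
intros [Hencl _] Hp He. specialize (Hencl _ Hp).
unfold Defs.dist in Hencl. fold (norm2 (psub p (0,0))) in Hencl.
pose proof (norm2_nonneg (psub p (0,0))) as Hz.
pose proof (sqrt_pos (norm2 (psub p (0,0)))) as Hsq.
assert (Hr2 : norm2 (psub p (0,0)) <= r ^ 2)
  by (rewrite <- (pow2_sqrt _ Hz); nra).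
assert (Hframe : dot e p ^ 2 + cross e p ^ 2 = norm2 (psub p (0,0))).
{ destruct e as [e1 e2], p as [p1 p2]; coords.
  transitivity ((p1 * p1 + p2 * p2) * (e1 * e1 + e2 * e2)); [ring|rewrite He; ring]. }
pose proof (pow2_ge_0 (dot e p)). pose proof (pow2_ge_0 (cross e p)).
split; [lra|split; apply abs_le_of_sq; lra].
Qed.

Lemma long_shift_slope (N rS rT dx px dy py : R) : 2 <= N -> 0 <= rS -> 0 <= rT ->
  - rT <= dx <= rT -> - rT <= px <= rT -> - rS <= dy <= rS -> - rS <= py <= rS ->
  let V := (rS + rT + 2) * (1 + 8 * N) in
  0 < V + dx - dy /\ (px - py) ^ 2 <= (1 / (8 * N)) ^ 2 * (V + dx - dy) ^ 2.
Proof.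
intros HN HS HT Hdx Hpx Hdy Hpy V.
set (R := rS + rT).
assert (HV : V - R = 8 * N * R + 2 + 16 * N) by (unfold V, R; ring).
assert (HNR : 0 <= N * R) by (apply Rmult_le_pos; unfold R; lra).
split; [unfold R in *; lra|].
assert (H1 : R <= 1 / (8 * N) * (V - R)).
{ apply Rmult_le_reg_l with (8 * N); [lra|]. field_simplify; [|lra]. nra. }
assert (H2 : 1 / (8 * N) * (V - R) <= 1 / (8 * N) * (V + dx - dy)).
{ apply Rmult_le_compat_l; [|unfold R; lra]. apply Rlt_le, Rdiv_lt_0_compat; lra. }
assert (H3 : (px - py) ^ 2 <= R ^ 2) by (unfold R; nra).
replace ((1 / (8 * N)) ^ 2 * (V + dx - dy) ^ 2) with ((1 / (8 * N) * (V + dx - dy)) ^ 2)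
  by ring.
assert (0 <= R) by (unfold R; lra). nra.
Qed.

Lemma motion_slope (S T : list point) (rS rT N : R) (d a b : point) :
  smallest_enclosing_disc S (0,0) rS -> smallest_enclosing_disc T (0,0) rT ->
  In a S -> In b T -> unit_vec d -> 2 <= N ->
  let w := psub (padd b (pscale ((rS + rT + 2) * (1 + 8 * N)) d)) a in
  0 < dot d w /\ cross d w ^ 2 <= (1 / (8 * N)) ^ 2 * dot d w ^ 2.
Proof.
intros ES ET Ha Hb Hd HN w.
destruct (enclosed_coords S rS d a ES Ha Hd) as [HrS [Ha1 Ha2]].
destruct (enclosed_coords T rT d b ET Hb Hd) as [HrT [Hb1 Hb2]].
set (V := (rS + rT + 2) * (1 + 8 * N)) in w.
assert (Ealong : dot d w = V + dot d b - dot d a).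
{ unfold w. destruct d as [d1 d2], a as [a1 a2], b as [b1 b2]; coords.
  transitivity (V * (d1 * d1 + d2 * d2) + (d1 * b1 + d2 * b2) - (d1 * a1 + d2 * a2)); [ring|].
  rewrite Hd; ring. }
assert (Eacross : cross d w = cross d b - cross d a).
{ unfold w. destruct d, a, b; coords. ring. }
rewrite Ealong, Eacross.
exact (long_shift_slope N rS rT _ _ _ _ HN HrS HrT Hb1 Hb2 Ha1 Ha2).
Qed.

Lemma unit_vec_opp (e : point) : unit_vec e -> unit_vec (pscale (-1) e).
Proof. destruct e; coords; lra. Qed.

Lemma reversal_invariants (e w : point) :
  dot (pscale (-1) e) (pscale (-1) w) = dot e w /\
  cross (pscale (-1) e) (pscale (-1) w) = cross e w.
Proof. destruct e, w; coords; split; ring. Qed.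

Lemma dot_opp_psub (e p q : point) : dot (pscale (-1) e) (psub q p) = dot e (psub p q).
Proof. destruct e, p, q; coords; ring. Qed.

Lemma pi_before_behind (d p q : point) : pi_before d p q -> dot d (psub q p) <= 0 /\ p <> q.
Proof.
unfold pi_before, xcoord, ycoord. intros Hpq. split.
- replace (dot d (psub q p)) with (dot q d - dot p d) by (destruct d, p, q; coords; ring).
  lra.
- intros ->. lra.
Qed.

Definition paper_shift (n : nat) (rS rT : R) (d : point) : point :=
  pscale ((rS + rT + 2) * (1 + 8 * INR n)) d.

Section Itinerary.

Variables (n : nat) (S T : list point) (rS rT : R) (d : point) (s t : list point).
Hypotheses (Hn : (2 <= n)%nat) (HS : length S = n) (HT : length T = n)
  (VS : valid_config S) (VT : valid_config T)
  (ES : smallest_enclosing_disc S (0,0) rS) (ET : smallest_enclosing_disc T (0,0) rT)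
  (Hd : unit_vec d)
  (HangS : forall u, DeltaDirs S u -> angle d u >= PI / (24 * INR n))
  (HangT : forall u, DeltaDirs T u -> angle d u >= PI / (24 * INR n))
  (PS : is_Pi d S s) (PT : is_Pi d T t).

Let v := paper_shift n rS rT d.

Lemma length_s : length s = n.
Proof. rewrite <- (Permutation_length (proj1 PS)). exact HS. Qed.

Lemma length_t : length t = n.
Proof. rewrite <- (Permutation_length (proj1 PT)). exact HT. Qed.

Lemma nth_s_in (k : nat) : (k < n)%nat -> In (nth k s (0,0)) S.
Proof.
intros Hk. apply (Permutation_in _ (Permutation_sym (proj1 PS))).
apply nth_In. rewrite length_s. exact Hk.
Qed.

Lemma nth_t_in (k : nat) : (k < n)%nat -> In (nth k t (0,0)) T.
Proof.
intros Hk. apply (Permutation_in _ (Permutation_sym (proj1 PT))).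
apply nth_In. rewrite length_t. exact Hk.
Qed.

Lemma shift_slope (i : nat) : (i < n)%nat ->
  let w := psub (padd (nth i t (0,0)) v) (nth i s (0,0)) in
  0 < dot d w /\ cross d w ^ 2 <= (1 / (8 * INR n)) ^ 2 * dot d w ^ 2.
Proof.
intros Hi. apply (motion_slope S T); auto using nth_s_in, nth_t_in.
apply (le_INR 2); exact Hn.
Qed.

Lemma later_sources_clear (i j : nat) : (i < j)%nat -> (j < n)%nat ->
  disjoint (conv (union (D (nth i s (0,0))) (D (padd (nth i t (0,0)) v))))
           (D (nth j s (0,0))).
Proof.
intros Hij Hj.
assert (Hi : (i < n)%nat) by lia.
destruct (pi_before_behind d _ _ (proj2 PS i j Hij ltac:(rewrite length_s; lia)))
  as [Hbehind Hne].
destruct (shift_slope i Hi) as [Hspeed Hslope].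
apply hull_disjoint. intros l Hl.
exact (segment_clears S d _ _ _ _ _ (paper_constants_compatible n Hn) VS Hd HangS
         (nth_s_in i Hi) (nth_s_in j Hj) Hne Hbehind Hspeed Hslope l Hl).
Qed.

(* Step i does not hit the discs of the targets already reached: this is the
   previous argument for the reversed motion, in T, with direction -d. *)
Lemma earlier_targets_clear (i j : nat) : (j < i)%nat -> (i < n)%nat ->
  disjoint (conv (union (D (nth i s (0,0))) (D (padd (nth i t (0,0)) v))))
           (D (padd (nth j t (0,0)) v)).
Proof.
intros Hji Hi.
assert (Hj : (j < n)%nat) by lia.
destruct (pi_before_behind d _ _ (proj2 PT j i Hji ltac:(rewrite length_t; lia)))
  as [Hbehind Hne].
destruct (shift_slope i Hi) as [Hspeed Hslope].
set (si := nth i s (0,0)) in *. set (ti := nth i t (0,0)) in *. set (tj := nth j t (0,0)) in *.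
set (w := psub (padd ti v) si) in Hspeed, Hslope.
destruct (reversal_invariants d w) as [Erev_dot Erev_cross].
apply disjoint_hull_comm, hull_disjoint. intros l Hl.
replace (psub (psub (padd tj v) (padd ti v)) (pscale l (psub si (padd ti v))))
  with (psub (psub tj ti) (pscale l (pscale (-1) w)))
  by (unfold w; destruct si, ti, tj, v; coords; f_equal; ring).
apply (segment_clears T (pscale (-1) d) _ _ _ _ _ (paper_constants_compatible n Hn) VT).
- apply unit_vec_opp, Hd.
- apply angle_condition_opp, HangT.
- apply nth_t_in, Hi.
- apply nth_t_in, Hj.
- exact (not_eq_sym Hne).
- rewrite dot_opp_psub. exact Hbehind.
- rewrite Erev_dot. exact Hspeed.
- rewrite Erev_dot, Erev_cross. exact Hslope.
- exact Hl.
Qed.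

Lemma pi_order_itinerary : valid_itinerary (combine s t) v.
Proof.
assert (Hlen : length s = length t) by (rewrite length_s, length_t; reflexivity).
assert (Hpair : forall k, nth k (combine s t) ((0,0),(0,0)) = (nth k s (0,0), nth k t (0,0)))
  by (intros k; apply combine_nth, Hlen).
intros i Hi. rewrite length_combine, length_s, length_t, Nat.min_id in Hi.
cbv zeta. rewrite Hpair. cbn [fst snd]. split.
- intros j Hij Hj. rewrite length_combine, length_s, length_t, Nat.min_id in Hj.
  rewrite Hpair. apply later_sources_clear; assumption.
- intros j Hji. rewrite Hpair. apply earlier_targets_clear; assumption.
Qed.

End Itinerary.

Theorem mainTheorem6 (n : nat) (S T : list point) (rS rT : R) (d : point)
  (s t : list point) :
  (2 <= n)%nat ->
  length S = n -> length T = n ->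
  valid_config S -> valid_config T ->
  smallest_enclosing_disc S (0,0) rS ->
  smallest_enclosing_disc T (0,0) rT ->
  unit_vec d ->
  (forall u, DeltaDirs S u \/ DeltaDirs T u -> angle d u >= PI / (24 * INR n)) ->
  is_Pi d S s -> is_Pi d T t ->
  let v := pscale ((rS + rT + 2) * (1 + 8 * INR n)) d in
  valid_translation (combine s t) v /\ valid_itinerary (combine s t) v.
Proof.
intros Hn HS HT VS VT ES ET Hd Hang PS PT v.
assert (Hit : valid_itinerary (combine s t) v).
{ apply (pi_order_itinerary n S T rS rT d s t Hn HS HT VS VT ES ET Hd); try assumption.
  - intros u Hu. apply Hang. left. exact Hu.
  - intros u Hu. apply Hang. right. exact Hu. }
split; [|exact Hit].
exists (combine s t). split; [apply Permutation_refl|exact Hit].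
Qed.
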